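(* Let $n\in\mathbb{N}$ and let $A$ be an $n\times n$ acyclic real symmetric matrix. Suppose $\lambda$ is an eigenvalue of $A$ of multiplicity $k$ and $U=\{u_1,\ldots,u_k\}$ is a $\lambda$-star set of $A$. For $i\in[k]$ let $U_i=U\setminus\{u_i\}$ and let $A_i$ be the principal submatrix of $A-U_i$ corresponding to the connected component of $G(A-U_i)$ containing $u_i$. Define $\boldsymbol{\alpha}_i\in\mathbb{R}^n$ by \[ \boldsymbol{\alpha}_i(v)=\begin{cases} W(P_{u_i,v})\,\phi(A_i-P_{u_i,v},\lambda) & \text{if } v \text{ is an index of } A_i,\\ 0 & \text{otherwise}.\end{cases} \] Then $\boldsymbol{\alpha}_1,\ldots,\boldsymbol{\alpha}_k$ are $k$ linearly independent $\lambda$-eigenvectors of $A$.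
   Context: $[n]=\{1,\ldots,n\}$. For a real symmetric matrix $A$ with rows/columns indexed by a set $I$, its graph $G(A)$ has vertex set $I$, with $u\neq v$ adjacent iff $A_{uv}\neq 0$; edge $uv$ has weight $w(uv)=A_{uv}$. $A$ is called acyclic if $G(A)$ is a forest. For $u,v$ in the same component, $P_{u,v}$ is the unique path between them (a single vertex if $u=v$), and $W(P_{u,v})$ is the product of the weights of its edges ($1$ if $u=v$). For an index set $U$, $A-U$ is the matrix obtained by deleting the rows and columns indexed by $U$. $\phi(B,\lambda)=\det(\lambda\mathbb{I}-B)$, with $\phi$ of the empty matrix equal to $1$. If $\lambda$ is an eigenvalue of $A$ of multiplicity $k$, a set $U$ of indices is a $\lambda$-star set if $|U|=k$ and $\lambda$ is not an eigenvalue of $A-U$. *)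

From HB Require Import structures.
From Stdlib Require Import ClassicalEpsilon.
From mathcomp Require Import all_boot all_order all_algebra.
From mathcomp Require Import reals.
Set Implicit Arguments. Unset Strict Implicit. Unset Printing Implicit Defensive.
Import Order.TTheory GRing.Theory Num.Theory.
Local Open Scope ring_scope.

Section Defs.
Variables (R : realType) (n : nat).
Implicit Types (A : 'M[R]_n) (S : {set 'I_n}).

Definition adjA A : rel 'I_n := fun u v => (u != v) && (A u v != 0).

(* G(A) restricted to the vertex set S (i.e. the graph of the principal
   submatrix indexed by S, with indices kept as in A) *)
Definition adjS A S : rel 'I_n := fun u v => [&& u \in S, v \in S & adjA A u v].

(* A is acyclic: G(A) has no cycle (a cycle = a closed walk through at
   least 3 pairwise distinct vertices) *)
Definition acyclic A : Prop :=
  forall c : seq 'I_n, ucycle (adjA A) c -> (size c <= 2)%N.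

(* principal submatrix of A indexed by S; A - U is psub A (~: U) *)
Definition psub A S : 'M[R]_#|S| :=
  \matrix_(i, j) A (enum_val i) (enum_val j).

(* phi(B, lambda) = det(lambda I - B) for the principal submatrix on S;
   the empty matrix gives 1 *)
Definition phi A S (l : R) : R := (char_poly (psub A S)).[l].

Definition eig_mult A (l : R) : nat := mup l (char_poly A).

Definition star_set A (l : R) S : Prop :=
  #|S| = eig_mult A l /\ ~~ eigenvalue (psub A (~: S)) l.

Definition component A S x : {set 'I_n} := [set y | connect (adjS A S) x y].

(* the path P_{u,v} of G(A) from u to v, as the list of vertices after u
   (the one chosen when unique; [::] if u = v) *)
Definition is_upath A u v (p : seq 'I_n) : Prop :=
  [&& path (adjA A) u p, last u p == v & uniq (u :: p)].

Definition upath A u v : seq 'I_n :=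
  epsilon (inhabits [::]) (fun p => is_upath A u v p).

Definition pathset A u v : {set 'I_n} := [set x in u :: upath A u v].

Definition pathweight A u v : R :=
  \prod_(e <- zip (u :: upath A u v) (upath A u v)) A e.1 e.2.

End Defs.

From HB Require Import structures.
From Stdlib Require Import ClassicalEpsilon.
From mathcomp Require Import all_boot all_order all_algebra.
From mathcomp Require Import reals.
From mathcomp Require Import perm ring zify.
Set Implicit Arguments. Unset Strict Implicit. Unset Printing Implicit Defensive.
Import Order.TTheory GRing.Theory Num.Theory.
Local Open Scope ring_scope.

(* Write M_S for l I - A on the vertex set S, padded with the identity, so
   that det M_S = phi(A[S], l).  When G(A) is a forest, Laplace expansion at a
   vertex v gives
     phi(S) = (l - a_vv) phi(S - v) - sum_{c ~ v} a_vc a_cv phi(S - v - c),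
   since the (v, c) cofactor of an edge is a_cv phi(S - v - c): without its
   (c, v) entry, row c lives on the component of c in S - v, which forces a
   repeated row.  Applied at the vertices of the component C of u_i along
   the paths from u_i, this recurrence shows (l I - A_C) alpha_i = phi(C) e_u_i.
   Now put S = V - U_i.  Then V - U = S - u_i and phi(A - U) factors as
   phi(S - C) phi(C - u_i) <> 0.  For symmetric A the algebraic multiplicity k
   equals dim ker(A - l I), so some l-eigenvector x vanishes on the k - 1
   vertices of U_i.  As l I - A is invertible on S - C, x is supported on C;
   so phi(C) = 0 and x(u_i) <> 0.  Finally x(u_i) alpha_i - alpha_i(u_i) x is
   supported on C - u_i and killed by l I - A there, so alpha_i is a multiple
   of x with alpha_i(u_i) = phi(C - u_i) <> 0.  Independence follows from
   alpha_i(u_j) = 0 for j <> i. *)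

Section Determinants.
Variable R : comPzRingType.

Lemma det_castmx m n (e : m = n) (M : 'M[R]_m) : \det (castmx (e, e) M) = \det M.
Proof. by case: n / e; rewrite castmx_id. Qed.

Lemma det_conj_perm n (s : 'S_n) (M : 'M[R]_n) :
  \det (\matrix_(i, j) M (s i) (s j)) = \det M.
Proof.
have -> : \matrix_(i, j) M (s i) (s j) = row_perm s (col_perm s M).
  by apply/matrixP => i j; rewrite !mxE.
rewrite row_permE col_permE !det_mulmx !det_perm odd_permV.
by rewrite mulrCA -expr2 sqrr_sign mulr1.
Qed.

Lemma det_id_off n (S : {set 'I_n}) (M : 'M[R]_n) :
  (forall i j, (i \notin S) || (j \notin S) -> M i j = (i == j)%:R) ->
  \det M = \det (\matrix_(i, j) M (enum_val i) (enum_val j) : 'M_#|S|).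
Proof.
move=> M_id.
have valS (a : 'I_#|S|) : enum_val a \in S by exact: (enum_valP a).
have valC (b : 'I_#|~: S|) : enum_val b \notin S by rewrite -in_setC (enum_valP b).
have neqSC (a : 'I_#|S|) (b : 'I_#|~: S|) : enum_val a != enum_val b :> 'I_n.
  by apply/eqP => eab; move: (valC b); rewrite -eab valS.
have e : (#|S| + #|~: S| = n)%N by rewrite cardsC card_ord.
pose f (i : 'I_(#|S| + #|~: S|)) : 'I_n :=
  match split i with inl a => enum_val a | inr b => enum_val b end.
have f_inj : injective f.
  move=> i j; rewrite /f -{2}(splitK i) -{2}(splitK j).
  case: (split i) => a; case: (split j) => b /= fij;
    by [rewrite (enum_val_inj fij) | case/eqP: (neqSC a b) | case/eqP: (neqSC b a)].
have g_inj : injective (f \o cast_ord (esym e)) by apply: inj_comp f_inj (@cast_ord_inj _ _ _).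
pose Mf := \matrix_(i, j) M (f i) (f j).
have -> : \det M = \det Mf.
  rewrite -(det_conj_perm (perm g_inj)) -(det_castmx e Mf); congr (\det _).
  by apply/matrixP => i j; rewrite castmxE !mxE !permE.
have -> : Mf = block_mx (\matrix_(i, j) M (enum_val i) (enum_val j)) 0 0 1%:M.
  have fl a : f (lshift #|~: S| a) = enum_val a by rewrite /f (unsplitK (inl _ a)).
  have fr b : f (rshift #|S| b) = enum_val b by rewrite /f (unsplitK (inr _ b)).
  apply/matrixP => i j; rewrite -(splitK i) -(splitK j).
  case: (split i) => a; case: (split j) => b /=.
  - by rewrite block_mxEul !mxE !fl.
  - by rewrite block_mxEur !mxE fl fr M_id ?valC ?orbT // (negbTE (neqSC a b)).
  - by rewrite block_mxEdl !mxE fl fr M_id ?valC // eq_sym (negbTE (neqSC b a)).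
  - by rewrite block_mxEdr !mxE !fr M_id ?valC // (inj_eq enum_val_inj).
by rewrite det_ublock det1 mulr1.
Qed.

Lemma cofactor_eq_off n (M N : 'M[R]_n) i j :
  (forall a b, a != i -> b != j -> M a b = N a b) -> cofactor M i j = cofactor N i j.
Proof.
move=> MN; rewrite /cofactor; congr (_ * \det _); apply/matrixP => a b.
by rewrite !mxE; apply: MN; rewrite eq_sym neq_lift.
Qed.

Lemma det_unit_row n (M : 'M[R]_n) i j :
  (forall b, M i b = (j == b)%:R) -> \det M = cofactor M i j.
Proof.
move=> Mi; rewrite (expand_det_row _ i) (bigD1 j) //= big1 ?addr0 => [|b bj].
  by rewrite Mi eqxx mul1r.
by rewrite Mi eq_sym (negbTE bj) mul0r.
Qed.

Lemma det_unit_row_clear n (M : 'M[R]_n) i : (forall b, M i b = (i == b)%:R) ->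
  \det M = \det (\matrix_(a, b) if (a == i) || (b == i) then (a == b)%:R else M a b).
Proof.
move=> Mi; rewrite (det_unit_row Mi) (@det_unit_row _ _ i i) => [|b]; last first.
  by rewrite mxE eqxx.
by apply: cofactor_eq_off => a b ai bi; rewrite mxE (negbTE ai) (negbTE bi).
Qed.

Lemma det_xrow n (M : 'M[R]_n) i1 i2 : i1 != i2 -> \det (xrow i1 i2 M) = - \det M.
Proof.
by move=> i12; rewrite xrowE det_mulmx det_perm odd_tperm i12 expr1 mulN1r.
Qed.

End Determinants.

Section SymmetricMultiplicity.
Variable R : realFieldType.

Lemma horner_det_pencil m (X Y : 'M[R]_m) a :
  (\det ('X *: map_mx polyC X - map_mx polyC Y)).[a] = \det (a *: X - Y).
Proof.
rewrite -[_.[a]]/(horner_eval a _) -det_map_mx; congr (\det _).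
apply/matrixP => i j; rewrite !mxE [LHS]horner_evalE hornerD hornerN.
by rewrite mulrC hornerMX !hornerC mulrC.
Qed.

Lemma horner_char_poly m (M : 'M[R]_m) a : (char_poly M).[a] = \det (a%:M - M).
Proof.
rewrite /char_poly (_ : char_poly_mx M = 'X *: map_mx polyC 1%:M - map_mx polyC M).
  by rewrite horner_det_pencil scalemx1.
by rewrite /char_poly_mx map_scalar_mx scale_scalar_mx mulr1.
Qed.

Lemma row_mul_tr_eq0 m (w : 'rV[R]_m) : w *m w^T = 0 -> w = 0.
Proof.
move/matrixP/(_ 0 0); rewrite !mxE => ww0.
have : \sum_j w 0 j ^+ 2 == 0.
  by apply/eqP; rewrite -[RHS]ww0; apply: eq_bigr => j _; rewrite !mxE expr2.
rewrite psumr_eq0 => [/allP w0|j _]; last exact: sqr_ge0.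
by apply/rowP => j; rewrite !mxE; have := w0 j (mem_index_enum j); rewrite sqrf_eq0 => /eqP.
Qed.

Lemma det_gram_neq0 p m (B : 'M[R]_(p, m)) : row_free B -> \det (B *m B^T) != 0.
Proof.
move=> freeB; apply/negP => /det0P [v /negP v0 vBB]; apply: v0.
have : (v *m B) *m (v *m B)^T = 0 by rewrite trmx_mul mulmxA -(mulmxA v) vBB mul0mx.
by move/row_mul_tr_eq0/eqP; rewrite mulmx_free_eq0.
Qed.

Lemma mup_char_poly_split p q n (dimpq : (p + q)%N = n)
    (A : 'M[R]_n) (B : 'M_(p, n)) (C : 'M_(q, n)) l :
  A^T = A -> B *m A = l *: B -> B *m C^T = 0 -> row_free B -> row_free C ->
  \det (C *m (A - l%:M) *m C^T) != 0 -> mup l (char_poly A) = p.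
Proof.
case: n / dimpq in A B C *; move=> symA BA BC freeB freeC detCAC.
have detBB := det_gram_neq0 freeB; have detCC := det_gram_neq0 freeC.
have CB : C *m B^T = 0 by rewrite -[C]trmxK -trmx_mul BC trmx0.
have CAB : C *m A *m B^T = 0.
  by rewrite -mulmxA -{1}symA -trmx_mul BA linearZ /= -scalemxAr CB scaler0.
pose P := col_mx B C.
have PP : P *m P^T = block_mx (B *m B^T) 0 0 (C *m C^T).
  by rewrite tr_col_mx mul_col_row BC CB.
have PAP : P *m A *m P^T = block_mx (l *: (B *m B^T)) 0 0 (C *m A *m C^T).
  by rewrite mul_col_mx tr_col_mx mul_col_row BA -!scalemxAl BC CAB scaler0.
have detP : \det P != 0.
  have := congr1 determinant PP; rewrite det_mulmx det_tr det_ublock => PP_det.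
  by apply: contraTneq (mulf_neq0 detBB detCC) => P0; rewrite -PP_det P0 mul0r eqxx.
pose D := 'X *: map_mx polyC (C *m C^T) - map_mx polyC (C *m A *m C^T).
have D_l : ~~ root (\det D) l.
  rewrite /root horner_det_pencil (_ : _ - _ = - (C *m (A - l%:M) *m C^T)).
    by rewrite -scaleN1r detZ mulf_eq0 negb_or detCAC signr_eq0.
  by rewrite mulmxBr mulmxBl mul_mx_scalar -scalemxAl opprB.
have congruence : char_poly A * ((\det P) ^+ 2)%:P =
    ('X - l%:P) ^+ p * ((\det (B *m B^T))%:P * \det D).
  have blocks : map_mx polyC P *m char_poly_mx A *m (map_mx polyC P)^T =
      block_mx (('X - l%:P) *: map_mx polyC (B *m B^T)) 0 0 D.
    rewrite /char_poly_mx map_trmx mulmxBr mul_mx_scalar mulmxBl -scalemxAl.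
    rewrite -!map_mxM PP PAP !map_block_mx !map_mx0 scale_block_mx !scaler0 map_mxZ /=.
    by rewrite opp_block_mx add_block_mx !subr0 scalerBl.
  have := congr1 determinant blocks.
  rewrite !det_mulmx det_tr det_ublock detZ !det_map_mx /= -/(char_poly A) => eq_det.
  by rewrite mulrA -eq_det mulrAC mulrC rmorphXn /= expr2.
have := congr1 (mup l) congruence.
rewrite mupMl ?rootC ?expf_neq0 // mupM ?expf_neq0 ?polyXsubC_eq0 ?mulf_neq0 ?polyC_eq0 //;
  last by apply: contraNneq D_l => ->; rewrite root0.
have mup_rest : mup l ((\det (B *m B^T))%:P * \det D) = 0%N.
  by rewrite mupNroot // rootM rootC negb_or detBB.
by rewrite mup_XsubCX eqxx mup_rest addn0.
Qed.

Lemma mup_char_poly_sym n (A : 'M[R]_n) l :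
  A^T = A -> mup l (char_poly A) = \rank (eigenspace A l).
Proof.
move=> symA; set E := eigenspace A l.
pose B := row_base E; pose F := kermx B^T; pose C := row_base F.
have dimEF : (\rank E + \rank F)%N = n.
  by rewrite [\rank F]mxrank_ker mxrank_tr (eq_row_base E) subnKC // rank_leq_col.
have BA : B *m A = l *: B by apply/eigenspaceP; rewrite (eq_row_base E) submx_refl.
have CB : C *m B^T = 0 by apply/sub_kermxP; rewrite (eq_row_base F) submx_refl.
have BC : B *m C^T = 0 by rewrite -[B]trmxK -trmx_mul CB trmx0.
apply: (mup_char_poly_split dimEF symA BA BC (row_base_free _) (row_base_free _)).
apply/negP => /det0P [v /negP v0 vCAC]; apply: v0.
pose w := v *m C; pose y := w *m (A - l%:M).
have sym_Al : (A - l%:M)^T = A - l%:M by rewrite linearB /= symA tr_scalar_mx.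
have yB : y *m B^T = 0.
  by rewrite -mulmxA -sym_Al -trmx_mul mulmxBr BA mul_mx_scalar subrr trmx0 mulmx0.
have /submxP [z yz] : (y <= C)%MS by rewrite (eq_row_base F); apply/sub_kermxP.
have y0 : y = 0.
  apply: row_mul_tr_eq0; rewrite {2}yz trmx_mul mulmxA.
  by rewrite (_ : y *m C^T = 0) ?mul0mx // /y /w -vCAC !mulmxA.
have /submxP [t wt] : (w <= B)%MS by rewrite (eq_row_base E); apply/sub_kermxP.
have t0 : t = 0.
  have BB_unit : B *m B^T \in unitmx by rewrite unitmxE unitfE det_gram_neq0 ?row_base_free.
  have wB : w *m B^T = 0 by rewrite -mulmxA CB mulmx0.
  by rewrite -(mulmxK BB_unit t) mulmxA -wt wB mul0mx.
by rewrite -(mulmx_free_eq0 v (row_base_free F)) -/C -/w wt t0 mul0mx.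
Qed.
End SymmetricMultiplicity.

Lemma exists_vanishing_row (F : fieldType) p n (E : 'M[F]_(p, n)) (Z : {set 'I_n}) :
  (#|Z| < \rank E)%N ->
  exists2 x : 'rV[F]_n, (x <= E)%MS & x != 0 /\ {in Z, forall j, x 0 j = 0}.
Proof.
move=> ZE; pose K : 'M[F]_(n, #|Z|) := \matrix_(a, j) (a == enum_val j)%:R.
have : \rank (E :&: kermx K)%MS != 0%N.
  have := mxrank_sum_cap E (kermx K); have := rank_leq_col (E + kermx K)%MS.
  rewrite mxrank_ker; have := rank_leq_col K; have := rank_leq_col E; lia.
rewrite mxrank_eq0 => /rowV0Pn [x]; rewrite sub_capmx => /andP [xE /sub_kermxP xK] x0.
exists x => //; split => // j jZ.
have /matrixP/(_ 0 (enum_rank_in jZ j)) := xK; rewrite !mxE => <-.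
rewrite (bigD1 j) //= big1 ?addr0 => [|a aj]; rewrite mxE enum_rankK_in ?eqxx ?mulr1 //.
by rewrite (negbTE aj) mulr0.
Qed.

Section Forest.
Variables (R : realType) (n : nat) (A : 'M[R]_n).
Hypothesis symA : A^T = A.
Hypothesis acA : acyclic A.
Implicit Types (S : {set 'I_n}) (u v w x y z c : 'I_n) (p q : seq 'I_n).

Lemma symA_entry i j : A i j = A j i.
Proof. by rewrite -{1}symA mxE. Qed.

Lemma adjA_sym : symmetric (adjA A).
Proof. by move=> x y; rewrite /adjA eq_sym symA_entry. Qed.

Lemma adjS_sym S : symmetric (adjS A S).
Proof. by move=> x y; rewrite /adjS adjA_sym andbCA. Qed.

Lemma connect_adjS_sym S : connect_sym (adjS A S).
Proof. exact/sym_connect_sym/adjS_sym. Qed.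

Lemma path_adjS_adjA S x p : path (adjS A S) x p -> path (adjA A) x p.
Proof. by apply: sub_path => a b /and3P []. Qed.

Lemma path_adjS_in S x p : path (adjS A S) x p -> all (fun z => z \in S) p.
Proof.
by elim: p x => //= y p IHp x /andP [/and3P [_ yS _] /IHp ->]; rewrite yS.
Qed.

Lemma connect_setC1 w x p : path (adjA A) x p -> w \notin x :: p ->
  {in x :: p, forall z, connect (adjS A (~: [set w])) x z}.
Proof.
move=> xp wxp; apply: path_connect.
elim: p x xp wxp => //= y p IHp x /andP [xy yp].
rewrite in_cons negb_or => /andP [wx wyp]; rewrite (IHp y yp wyp) andbT.
by rewrite /adjS xy !inE andbT !(eq_sym _ w) wx; case/norP: wyp.
Qed.

Lemma neighbours_disconnected S v c c' : v \notin S -> c != c' ->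
  adjA A v c -> adjA A v c' -> ~~ connect (adjS A S) c c'.
Proof.
move=> vS cc' vc vc'; apply/negP => /connectP [p cp].
case: (shortenP cp) => q cq uq _ {p cp} qc'.
have vcq : v \notin c :: q.
  rewrite inE negb_or; apply/andP; split; first by case/andP: vc.
  by apply/negP => /(allP (path_adjS_in cq)); rewrite (negbTE vS).
have cycle_vcq : ucycle (adjA A) [:: v, c & q].
  rewrite /ucycle /= vc rcons_path (path_adjS_adjA cq) -qc' adjA_sym vc' /=.
  by rewrite -/(uniq (c :: q)) uq andbT; move: vcq; rewrite inE.
have := acA cycle_vcq.
by case: q {cq uq vcq cycle_vcq} qc' => [/= c'c|//]; rewrite c'c eqxx in cc'.
Qed.

Lemma mem_component S x : x \in component A S x.
Proof. by rewrite inE connect0. Qed.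

Lemma component_sub S x y : x \in S -> y \in component A S x -> y \in S.
Proof.
rewrite inE => xS /connectP [[|z p] xp -> //].
exact: (allP (path_adjS_in xp)) _ (mem_last z p).
Qed.

Lemma component_closed S x y z : x \in S -> y \in component A S x ->
  z \in S -> adjA A y z -> z \in component A S x.
Proof.
move=> xS Cy zS yz; have yS := component_sub xS Cy.
by move: Cy; rewrite !inE => /connect_trans; apply; apply: connect1; rewrite /adjS yS zS.
Qed.

Lemma component_adj0 S x i j : x \in S -> i \in component A S x -> j \in S ->
  j \notin component A S x -> A i j = 0.
Proof.
move=> xS Ci jS; apply: contraNeq => Aij; have [<- //|ij] := eqVneq i j.
by apply: component_closed xS Ci jS _; rewrite /adjA ij.
Qed.

Lemma component_setD1_adj0 S v c i : c \in S :\ v -> adjA A v c ->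
  i \in component A (S :\ v) c -> i != c -> A i v = 0.
Proof.
move=> cSv vc Ci ic; have /setD1P [iv _] := component_sub cSv Ci.
apply/eqP; apply: contraTT Ci => Aiv.
have vi : adjA A v i by rewrite /adjA eq_sym iv symA_entry.
rewrite inE; apply: neighbours_disconnected vc vi; first by rewrite !inE eqxx.
by rewrite eq_sym.
Qed.

Lemma is_upath_unique u v p q : is_upath A u v p -> is_upath A u v q -> p = q.
Proof.
elim: p u q => [|x p IHp] u [|y q] //.
- move=> /and3P [_ /eqP /= <- _] /and3P [_ /eqP /= <- /andP [uyq _]].
  by rewrite mem_last in uyq.
- move=> /and3P [_ /eqP /= <- /andP [uxp _]] /and3P [_ /eqP /= vu _].
  by rewrite vu mem_last in uxp.
move=> /and3P [/= /andP [ux xp] /eqP xpv /andP [uxp uniq_xp]].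
move=> /and3P [/= /andP [uy yq] /eqP yqv /andP [uyq uniq_yq]].
have [eq_xy|xy] := eqVneq x y.
  subst y; congr (_ :: _); apply: (IHp x).
  - by rewrite /is_upath xp xpv eqxx.
  - by rewrite /is_upath yq yqv eqxx.
have u_out : u \notin ~: [set u] by rewrite !inE eqxx.
have [] := negP (neighbours_disconnected u_out xy ux uy).
have xv := connect_setC1 xp uxp (mem_last x p).
have yv := connect_setC1 yq uyq (mem_last y q).
rewrite xpv in xv; rewrite yqv connect_adjS_sym in yv.
exact: connect_trans xv yv.
Qed.

Lemma upath_spec S u v : u \in S -> v \in component A S u ->
  is_upath A u v (upath A u v) /\ all (fun z => z \in component A S u) (upath A u v).
Proof.
rewrite [v \in _]inE => uS /connectP [p up ->].
case: (shortenP up) => q uq uniq_q _.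
have q_upath : is_upath A u (last u q) q by rewrite /is_upath (path_adjS_adjA uq) eqxx.
have -> : upath A u (last u q) = q.
  exact: is_upath_unique (epsilon_spec (inhabits [::]) _ (ex_intro _ q q_upath)) q_upath.
split=> //; apply/allP => z zq; rewrite inE; apply: (path_connect uq).
by rewrite inE zq orbT.
Qed.

End Forest.

Lemma prod_zip_rcons (R : pzSemiRingType) (T : Type) (F : T -> T -> R) x s v :
  \prod_(e <- zip (x :: rcons s v) (rcons s v)) F e.1 e.2 =
  (\prod_(e <- zip (x :: s) s) F e.1 e.2) * F (last x s) v.
Proof.
elim: s x => [|y s IHs] x /=; first by rewrite !big_cons !big_nil mul1r mulr1.
by rewrite !big_cons IHs mulrA.
Qed.

Section UniquePaths.
Variables (R : realType) (n : nat) (A : 'M[R]_n).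
Hypothesis symA : A^T = A.
Hypothesis acA : acyclic A.
Variables (S : {set 'I_n}) (u : 'I_n).
Hypothesis uS : u \in S.
Implicit Types (v w c : 'I_n).
Local Notation C := (component A S u).
Local Notation up := (upath A u).

Lemma upathP v : v \in C -> is_upath A u v (up v).
Proof. by move=> Cv; case: (upath_spec symA acA uS Cv). Qed.

Lemma upath_in v : v \in C -> all (fun z => z \in C) (up v).
Proof. by move=> Cv; case: (upath_spec symA acA uS Cv). Qed.

Lemma last_upath v : v \in C -> last u (up v) = v.
Proof. by move=> /upathP /and3P [_ /eqP]. Qed.

Lemma upath_root : up u = [::].
Proof.
apply: (is_upath_unique symA acA (upathP (mem_component _ _ _))).
by rewrite /is_upath /= eqxx.
Qed.

Lemma mem_pathset v z : (z \in pathset A u v) = (z \in u :: up v).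
Proof. by rewrite /pathset in_set. Qed.

Lemma pathweight_rcons v w : w \in C ->
  up v = rcons (up w) v -> pathweight A u v = pathweight A u w * A w v.
Proof. by move=> Cw upv; rewrite /pathweight upv prod_zip_rcons last_upath. Qed.

Lemma pathset_rcons v w : up v = rcons (up w) v -> pathset A u v = v |: pathset A u w.
Proof.
by move=> upv; apply/setP => z; rewrite /pathset upv !inE mem_rcons inE orbCA.
Qed.

Lemma upath_pred v : v \in C -> v != u -> exists2 w, w \in C &
  [/\ adjA A w v, up v = rcons (up w) v & v \notin u :: up w].
Proof.
move=> Cv vu; have := upathP Cv; have := upath_in Cv.
case/lastP: (up v) => [|q v'].
  by move=> _ /and3P [_ /eqP /= uv _]; rewrite uv eqxx in vu.
rewrite /is_upath last_rcons rcons_path -rcons_cons rcons_uniq.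
move=> qC /and3P [/andP [uq wv] /eqP <- /andP [vq uniq_q]].
have Cw : last u q \in C.
  have := mem_last u q; rewrite inE => /orP [/eqP -> | wq]; first exact: mem_component.
  by apply: (allP qC); rewrite mem_rcons inE wq orbT.
exists (last u q) => //.
have q_upath : is_upath A u (last u q) q by rewrite /is_upath uq eqxx uniq_q.
by rewrite (is_upath_unique symA acA (upathP Cw) q_upath).
Qed.

Lemma upath_succ v c : v \in C -> c \in S -> adjA A v c -> c \notin u :: up v ->
  c \in C /\ up c = rcons (up v) c.
Proof.
move=> Cv cS vc c_up; have Cc := component_closed uS Cv cS vc; split=> //.
have /and3P [uv /eqP lastv uniqv] := upathP Cv.
apply: (is_upath_unique symA acA (upathP Cc)).
by rewrite /is_upath rcons_path uv lastv vc last_rcons eqxx -rcons_cons rcons_uniq c_up.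
Qed.

Lemma upath_pred_unique v w c : w \in C -> adjA A w v ->
  up v = rcons (up w) v -> v \notin u :: up w ->
  c \in u :: up v -> adjA A v c -> c = w.
Proof.
move=> Cw wv upv v_upw c_upv vc.
have c_upw : c \in u :: up w.
  move: c_upv; rewrite upv -rcons_cons mem_rcons inE => /orP [/eqP cv | //].
  by move: vc; rewrite cv /adjA eqxx.
have [//|cw] := eqVneq c w.
have v_out : v \notin ~: [set v] by rewrite !inE eqxx.
have vw : adjA A v w by rewrite adjA_sym.
have /negP[] := neighbours_disconnected symA acA v_out cw vc vw.
have /and3P [uw /eqP lastw _] := upathP Cw.
have conn := connect_setC1 uw v_upw.
have cu : connect (adjS A (~: [set v])) c u by rewrite (connect_adjS_sym symA); exact: conn.
by apply: connect_trans cu (conn w _); rewrite -{1}lastw mem_last.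
Qed.

End UniquePaths.

Section PaddedCharMatrix.
Variables (R : realType) (n : nat) (A : 'M[R]_n) (l : R).
Implicit Types (S : {set 'I_n}) (z : 'cV[R]_n).

(* Locked so that [mxE] does not unfold it inside matrix products. *)
Definition pcharmx S : 'M[R]_n := locked
  (\matrix_(i, j) if (i \in S) && (j \in S) then l * (i == j)%:R - A i j else (i == j)%:R).

Lemma pcharmxE S i j : pcharmx S i j =
  if (i \in S) && (j \in S) then l * (i == j)%:R - A i j else (i == j)%:R.
Proof. by rewrite /pcharmx -lock mxE. Qed.

Lemma pcharmx_out S i j : (i \notin S) || (j \notin S) -> pcharmx S i j = (i == j)%:R.
Proof. by rewrite pcharmxE => /orP [] /negbTE ->; rewrite ?andbF. Qed.

Lemma pcharmx_in S i j : i \in S -> j \in S -> pcharmx S i j = l * (i == j)%:R - A i j.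
Proof. by rewrite pcharmxE => -> ->. Qed.

Lemma phi_det S : phi A S l = \det (pcharmx S).
Proof.
rewrite /phi horner_char_poly (@det_id_off _ _ S (pcharmx S)); last exact: pcharmx_out.
congr (\det _); apply/matrixP => i j; rewrite !mxE pcharmx_in ?enum_valP //.
by rewrite (inj_eq enum_val_inj) mulr_natr.
Qed.

Lemma pcharmx_mul S (K : 'M[R]_n) : (forall k j, k \in S -> K k j = (k == j)%:R) ->
  pcharmx S *m K = \matrix_(i, j) if i \in S then pcharmx S i j else K i j.
Proof.
move=> K_id; apply/matrixP => i j; rewrite !mxE; case: ifP => iS.
  rewrite (bigD1 j) //= big1 ?addr0 => [|k kj].
    case jS: (j \in S); first by rewrite K_id // eqxx mulr1.
    rewrite pcharmx_out ?jS ?orbT //; case: eqP => [ij|]; last by rewrite mul0r.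
    by rewrite ij jS in iS.
  case kS: (k \in S); first by rewrite K_id // (negbTE kj) mulr0.
  rewrite pcharmx_out ?kS ?orbT //; case: eqP => [ik|]; last by rewrite mul0r.
  by rewrite ik kS in iS.
rewrite (bigD1 i) //= pcharmx_out ?iS // eqxx mul1r big1 ?addr0 // => k ki.
by rewrite pcharmx_out ?iS // eq_sym (negbTE ki) mul0r.
Qed.

Lemma cofactor_pcharmx_diag S v : cofactor (pcharmx S) v v = phi A (S :\ v) l.
Proof.
rewrite phi_det (@det_unit_row _ _ (pcharmx (S :\ v)) v v) => [|j]; last first.
  by rewrite pcharmx_out // !inE eqxx.
by apply: cofactor_eq_off => a b av bv; rewrite !pcharmxE !inE av bv.
Qed.

Lemma pcharmx_mulmx_out S v z : v \notin S -> (pcharmx S *m z) v 0 = z v 0.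
Proof.
move=> vS; rewrite mxE (bigD1 v) //= pcharmx_out ?vS // eqxx mul1r big1 ?addr0 // => j jv.
by rewrite pcharmx_out ?vS // eq_sym (negbTE jv) mul0r.
Qed.

Lemma pcharmx_mulmx_in S z v : {in ~: S, forall j, z j 0 = 0} -> v \in S ->
  (pcharmx S *m z) v 0 = ((l%:M - A) *m z) v 0.
Proof.
move=> zS vS; rewrite !mxE; apply: eq_bigr => j _.
case jS: (j \in S); last by rewrite zS ?inE ?jS // !mulr0.
by rewrite pcharmx_in // !mxE mulr_natr.
Qed.

Lemma pcharmx_mulmx_row S z v : {in ~: S, forall j, z j 0 = 0} -> v \in S ->
  (pcharmx S *m z) v 0 = (l - A v v) * z v 0 - \sum_(j in S | adjA A v j) A v j * z j 0.
Proof.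
move=> zS vS; rewrite mxE (bigD1 v) //= pcharmx_in // eqxx mulr1.
congr (_ + _); rewrite -sumrN big_mkcond [RHS]big_mkcond /=; apply: eq_bigr => j _.
case: (eqVneq j v) => [->|jv]; first by rewrite /adjA eqxx andbF.
case jS: (j \in S); last by rewrite zS ?inE ?jS // mulr0.
rewrite pcharmx_in // eq_sym (negbTE jv) mulr0 sub0r mulNr /adjA eq_sym jv /=.
by have [->|] := eqVneq (A v j) 0; rewrite ?mul0r ?oppr0.
Qed.

Lemma pcharmx_kernel_eq0 S z : phi A S l != 0 -> {in ~: S, forall j, z j 0 = 0} ->
  {in S, forall v, ((l%:M - A) *m z) v 0 = 0} -> z = 0.
Proof.
move=> phiS zS zker; have unitS : pcharmx S \in unitmx by rewrite unitmxE unitfE -phi_det.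
rewrite -(mulKmx unitS z) (_ : pcharmx S *m z = 0) ?mulmx0 //.
apply/matrixP => v k; rewrite (ord1 k) [RHS]mxE.
have [vS|vS] := boolP (v \in S); first by rewrite pcharmx_mulmx_in // zker.
by rewrite pcharmx_mulmx_out // zS // inE.
Qed.

End PaddedCharMatrix.

Section ForestCharPoly.
Variables (R : realType) (n : nat) (A : 'M[R]_n) (l : R).
Hypothesis symA : A^T = A.
Hypothesis acA : acyclic A.
Implicit Types (S : {set 'I_n}).
Local Notation pcharmx := (pcharmx A l).

Lemma pcharmx_disjointU S1 S2 : [disjoint S1 & S2] ->
  (forall i j, i \in S1 -> j \in S2 -> A i j = 0) ->
  pcharmx (S1 :|: S2) = pcharmx S2 *m pcharmx S1.
Proof.
move=> S12 A12.
have S1_S2 x : x \in S1 -> x \in S2 = false by move=> xS; rewrite (disjointFr S12 xS).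
have S2_S1 x : x \in S2 -> x \in S1 = false by move=> xS; rewrite (disjointFl S12 xS).
rewrite pcharmx_mul => [|k j kS2]; last by rewrite pcharmx_out // S2_S1.
apply/matrixP => i j; rewrite mxE !pcharmxE !inE.
case iS2: (i \in S2).
  rewrite (S2_S1 _ iS2) /=; case jS2: (j \in S2); rewrite ?orbT //=.
  case jS1: (j \in S1) => //=.
  have -> : (i == j) = false by apply: contraFF jS2 => /eqP <-.
  by rewrite mulr0 sub0r symA_entry // A12 // oppr0.
case iS1: (i \in S1) => //=; case jS1: (j \in S1) => //=; case jS2: (j \in S2) => //=.
have -> : (i == j) = false by apply: contraFF iS2 => /eqP ->.
by rewrite mulr0 sub0r A12 // oppr0.
Qed.

Lemma phi_disjointU S1 S2 : [disjoint S1 & S2] ->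
  (forall i j, i \in S1 -> j \in S2 -> A i j = 0) ->
  phi A (S1 :|: S2) l = phi A S1 l * phi A S2 l.
Proof. by move=> S12 A12; rewrite !phi_det pcharmx_disjointU // det_mulmx mulrC. Qed.

(* Without its entry (c, v), row c is supported on the component [Z] of [c]
   in [S :\ v], so the matrix factors through [pcharmx Z] and a matrix with
   two equal rows [v] and [c]. *)
Lemma det_pcharmx_cut S v c : v \in S -> c \in S -> adjA A v c ->
  \det (\matrix_(i, j) if i == v then (c == j)%:R
          else if (i == c) && (j == v) then 0 else pcharmx S i j) = 0.
Proof.
move=> vS cS vc; have cv : c != v by rewrite eq_sym; case/andP: vc.
pose Z := component A (S :\ v) c; pose X := S :\: Z.
have cSv : c \in S :\ v by rewrite !inE cv.
have Zc : c \in Z := mem_component _ _ _.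
have ZSv z : z \in Z -> z \in S :\ v := component_sub cSv.
have vZ : v \notin Z by apply/negP => /ZSv; rewrite !inE eqxx.
have Z_out i j : i \in Z -> j \in S :\ v -> j \notin Z -> A i j = 0 := component_adj0 cSv.
have Z_v i : i \in Z -> i != c -> A i v = 0 := component_setD1_adj0 symA acA cSv vc.
pose K := \matrix_(i, j) if i == v then (c == j)%:R else pcharmx X i j.
rewrite (_ : \matrix_(i, j) _ = pcharmx Z *m K); last first.
  rewrite pcharmx_mul => [|k j Zk]; last first.
    have kv : k != v by apply: contraNneq vZ => <-.
    by rewrite mxE (negbTE kv) pcharmx_out // inE Zk.
  apply/matrixP => i j; rewrite !mxE.
  case Zi: (i \in Z).
    have [iS iv] : i \in S /\ i != v by have := ZSv _ Zi; rewrite !inE => /andP [].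
    rewrite (negbTE iv) /=.
    case Zj: (j \in Z).
      have /setD1P [jv jS] := ZSv _ Zj.
      by rewrite (negbTE jv) andbF !pcharmx_in.
    have ij : (i == j) = false by apply: contraFF Zj => /eqP <-.
    rewrite [pcharmx Z i j]pcharmx_out ?Zj ?orbT // ij.
    case: (eqVneq j v) => [->|jv]; rewrite ?andbT ?andbF /=.
      by case: eqP => // /eqP ic; rewrite pcharmx_in // (negbTE iv) Z_v // mulr0 subrr.
    case Sj: (j \in S); last by rewrite pcharmx_out ?ij ?Sj ?orbT.
    have Aij : A i j = 0 by apply: (Z_out); rewrite ?Zi ?Zj ?in_setD1 ?jv ?Sj.
    by rewrite pcharmx_in // ij Aij mulr0 subr0.
  case: (eqVneq i v) => [//|iv]; have -> : (i == c) = false by apply: contraFF Zi => /eqP ->.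
  case Si: (i \in S); last by rewrite !pcharmx_out ?inE ?Si ?andbF.
  have Xi : i \in X by rewrite inE Zi Si.
  case Xj: (j \in X); first by rewrite !pcharmx_in //; move: Xj; rewrite inE => /andP [].
  have ij : (i == j) = false by apply: contraFF Xj => /eqP <-.
  rewrite [pcharmx X i j]pcharmx_out ?Xj ?orbT // ij.
  case Sj: (j \in S); last by rewrite pcharmx_out ?Sj ?orbT // ij.
  have Zj : j \in Z by move: Xj; rewrite inE Sj andbT => /negbFE.
  by rewrite pcharmx_in // ij mulr0 sub0r symA_entry // Z_out ?oppr0 ?Zi // !inE iv Si.
have Kvc : K v =1 K c by move=> j; rewrite !mxE eqxx (negbTE cv) pcharmx_out // inE Zc.
by rewrite det_mulmx (determinant_alternate _ Kvc) ?mulr0 // eq_sym.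
Qed.

Lemma cofactor_pcharmx_adj S v c : v \in S -> c \in S -> adjA A v c ->
  cofactor (pcharmx S) v c = A c v * phi A (S :\ v :\ c) l.
Proof.
move=> vS cS vc; have vc' : v != c by case/andP: vc.
have cv : c != v by rewrite eq_sym.
pose M := \matrix_(i, j) if i == v then (c == j)%:R else pcharmx S i j.
pose M1 := \matrix_(i, j) if i == v then (c == j)%:R
             else if (i == c) && (j == v) then 0 else pcharmx S i j.
pose M2 := \matrix_(i, j) if i == v then (c == j)%:R
             else if i == c then (v == j)%:R else pcharmx S i j.
have -> : cofactor (pcharmx S) v c = \det M.
  rewrite (@det_unit_row _ _ M v c) => [|j]; last by rewrite mxE eqxx.
  by apply: cofactor_eq_off => a b av _; rewrite mxE (negbTE av).
have -> : \det M = 1 * \det M1 + pcharmx S c v * \det M2.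
  have row'_c (N : 'M[R]_n) : (forall i j, i != c -> N i j = M i j) -> row' c N = row' c M.
    by move=> NM; apply/matrixP => a b; rewrite [LHS]mxE [RHS]mxE NM // eq_sym neq_lift.
  apply: determinant_multilinear; last 2 first.
  - by apply: row'_c => i j ic; rewrite !mxE (negbTE ic) andFb.
  - by apply: row'_c => i j ic; rewrite !mxE (negbTE ic).
  apply/rowP => j; rewrite !mxE (negbTE cv) eqxx /=.
  by case: (eqVneq j v) => [->|jv]; rewrite /= ?mul1r ?add0r ?mulr1 ?mulr0 ?addr0.
have detM2 : \det M2 = - phi A (S :\ v :\ c) l.
  apply: (canRL (@opprK _)); rewrite -(det_xrow M2 vc').
  rewrite (@det_unit_row_clear _ _ _ v) => [|j]; last by rewrite !mxE tpermL (negbTE cv) eqxx.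
  rewrite (@det_unit_row_clear _ _ _ c) => [|j]; last first.
    by rewrite !mxE (negbTE cv) tpermR eqxx; case: (eqVneq j v) => [->|//]; rewrite (negbTE cv).
  rewrite phi_det; congr (\det _); apply/matrixP => i j; rewrite !mxE !pcharmxE !inE.
  case: (eqVneq i c) => [->|ic] //=; case: (eqVneq j c) => [->|jc] /=; first by rewrite andbF.
  case: (eqVneq i v) => [->|iv] //=; case: (eqVneq j v) => [->|jv] /=; first by rewrite andbF.
  have [vi ci] : v != i /\ c != i by rewrite !(eq_sym _ i).
  by rewrite tpermD // (negbTE iv) (negbTE ic).
rewrite det_pcharmx_cut // detM2 mulr0 add0r pcharmx_in // (negbTE cv) mulr0 sub0r.
by rewrite mulrNN.
Qed.

Lemma phi_expand S v : v \in S -> phi A S l =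
  (l - A v v) * phi A (S :\ v) l - \sum_(c in S | adjA A v c) A v c * A c v * phi A (S :\ v :\ c) l.
Proof.
move=> vS; rewrite phi_det (expand_det_row _ v) (bigD1 v) //= cofactor_pcharmx_diag.
rewrite pcharmx_in // eqxx mulr1; congr (_ + _).
rewrite -sumrN big_mkcond [RHS]big_mkcond /=; apply: eq_bigr => j _.
case: (eqVneq j v) => [->|jv]; first by rewrite /adjA eqxx andbF.
have vj : (v == j) = false by rewrite eq_sym (negbTE jv).
case Sj: (j \in S); last by rewrite pcharmx_out ?Sj ?orbT // vj mul0r.
case vj_adj: (adjA A v j).
  by rewrite cofactor_pcharmx_adj // pcharmx_in // vj mulr0 sub0r mulNr mulrA.
have Avj : A v j = 0 by move: vj_adj; rewrite /adjA vj /= => /negbFE/eqP.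
by rewrite pcharmx_in // vj Avj /= mulr0 subrr mul0r.
Qed.
End ForestCharPoly.

Section PathVector.
Variables (R : realType) (n : nat) (A : 'M[R]_n) (l : R).
Hypothesis symA : A^T = A.
Hypothesis acA : acyclic A.
Variables (S : {set 'I_n}) (u : 'I_n).
Hypothesis uS : u \in S.
Local Notation C := (component A S u).
Local Notation up := (upath A u).

Definition pathvec : 'cV[R]_n := locked
  (\col_v (if v \in C then pathweight A u v * phi A (C :\: pathset A u v) l else 0)).

Lemma pathvecE v :
  pathvec v 0 = if v \in C then pathweight A u v * phi A (C :\: pathset A u v) l else 0.
Proof. by rewrite /pathvec -lock mxE. Qed.

Lemma pathvec_out : {in ~: C, forall v, pathvec v 0 = 0}.
Proof. by move=> v; rewrite inE pathvecE => /negbTE ->. Qed.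

Lemma pathweight_root : pathweight A u u = 1.
Proof. by rewrite /pathweight (upath_root symA acA uS) big_nil. Qed.

Lemma pathset_root : pathset A u u = [set u].
Proof. by apply/setP => z; rewrite /pathset (upath_root symA acA uS) !inE. Qed.

Lemma pathvec_root : pathvec u 0 = phi A (C :\ u) l.
Proof. by rewrite pathvecE mem_component pathweight_root pathset_root mul1r. Qed.

Lemma pcharmx_pathvec_root : (pcharmx A l C *m pathvec) u 0 = phi A C l.
Proof.
have Cu := mem_component A S u.
rewrite (pcharmx_mulmx_row A l pathvec_out Cu) (phi_expand l symA acA Cu) pathvec_root.
congr (_ - _); apply: eq_bigr => j /andP [Cj uj].
have j_up : j \notin u :: up u by rewrite (upath_root symA acA uS) inE eq_sym; case/andP: uj.
have [_ upj] := upath_succ symA acA uS Cu (component_sub uS Cj) uj j_up.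
rewrite pathvecE Cj (pathweight_rcons symA acA uS Cu upj) pathweight_root mul1r.
rewrite (pathset_rcons upj) pathset_root (symA_entry symA j u) mulrA; congr (_ * phi A _ l).
by apply/setP => z; rewrite !inE negb_or andbA [(z != j) && _]andbC.
Qed.

(* With S' := C minus the path to the predecessor w of v, the row-v entry is
   W(P_(u,w)) a_wv times the expansion of phi(S') at v. *)
Lemma pcharmx_pathvec_nonroot v : v \in C -> v != u -> (pcharmx A l C *m pathvec) v 0 = 0.
Proof.
move=> Cv vu; have [w Cw [wv upv v_upw]] := upath_pred symA acA uS Cv vu.
pose S' := C :\: pathset A u w.
have S'v : v \in S' by rewrite inE Cv andbT /pathset inE.
have S'vE : S' :\ v = C :\: pathset A u v.
  by apply/setP => z; rewrite (pathset_rcons upv) !inE; case: (z == v).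
have w_only j : j \in C -> adjA A v j -> (j \in pathset A u w) = (j == w).
  rewrite mem_pathset => Cj vj; apply/idP/eqP => [j_upw|->].
    apply: (upath_pred_unique symA acA uS Cw wv upv v_upw _ vj).
    by rewrite upv -rcons_cons mem_rcons inE j_upw orbT.
  by rewrite -{1}(last_upath symA acA uS Cw) mem_last.
have children : \sum_(j | (j \in C) && adjA A v j && (j != w)) A v j * pathvec j 0 =
    pathweight A u v * \sum_(j in S' | adjA A v j) A v j * A j v * phi A (S' :\ v :\ j) l.
  rewrite big_distrr; apply: eq_big => [j|j /andP [/andP [Cj vj] jw]].
    rewrite /S' in_setD; case Cj: (j \in C); rewrite ?andbF //=.
    by case vj: (adjA A v j); rewrite ?andbF //= w_only ?Cj ?vj ?andbT.
  have j_upv : j \notin u :: up v.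
    rewrite upv -rcons_cons mem_rcons in_cons -mem_pathset w_only // negb_or jw andbT.
    by rewrite eq_sym; case/andP: vj.
  have [_ upj] := upath_succ symA acA uS Cv (component_sub uS Cj) vj j_upv.
  rewrite pathvecE Cj (pathweight_rcons symA acA uS Cv upj) (pathset_rcons upj).
  rewrite (symA_entry symA j v) (_ : C :\: (j |: pathset A u v) = S' :\ v :\ j) /=; first ring.
  by apply/setP => z; rewrite S'vE !inE; case: (z == j).
rewrite (pcharmx_mulmx_row A l pathvec_out Cv) (bigD1 w) /=; last by rewrite Cw adjA_sym.
rewrite children !pathvecE Cv Cw -S'vE (pathweight_rcons symA acA uS Cw upv).
rewrite (phi_expand l symA acA S'v) (symA_entry symA v w); ring.
Qed.

Lemma pcharmx_pathvec : pcharmx A l C *m pathvec = \col_v ((v == u)%:R * phi A C l).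
Proof.
apply/matrixP => v k; rewrite (ord1 k) [RHS]mxE.
case: (eqVneq v u) => [->|vu]; first by rewrite pcharmx_pathvec_root mul1r.
rewrite mul0r; case: (boolP (v \in C)) => [Cv|Cv]; first exact: pcharmx_pathvec_nonroot.
by rewrite pcharmx_mulmx_out // pathvecE (negbTE Cv).
Qed.

End PathVector.

Section ComponentEigenvectors.
Variables (R : realType) (n : nat) (A : 'M[R]_n) (l : R).
Hypothesis symA : A^T = A.
Hypothesis acA : acyclic A.
Variables (S : {set 'I_n}) (w : 'I_n).
Hypothesis wS : w \in S.
Local Notation C := (component A S w).

Lemma phi_setD1_component : phi A (S :\ w) l = phi A (S :\: C) l * phi A (C :\ w) l.
Proof.
have -> : S :\ w = (S :\: C) :|: (C :\ w).
  apply/setP => z; rewrite in_setD1 in_setU in_setD in_setD1; case Cz: (z \in C) => /=.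
    by rewrite (component_sub wS Cz) andbT.
  have zw : z != w by apply: contraFneq Cz => ->; exact: mem_component.
  by rewrite zw andbF orbF.
apply: (phi_disjointU l symA) => [|i j /setDP [Si Ci] /setD1P [_ Cj]].
  rewrite -setI_eq0 -subset0; apply/subsetP => z.
  by rewrite in_setI in_setD in_setD1 in_set0; case: (z \in C); rewrite /= ?andbF.
by rewrite (symA_entry symA) (component_adj0 wS Cj).
Qed.

Lemma eigenvector_component_support (x : 'cV[R]_n) :
  phi A (S :\: C) l != 0 -> A *m x = l *: x ->
  {in ~: S, forall j, x j 0 = 0} -> {in ~: C, forall j, x j 0 = 0}.
Proof.
move=> phiO Ax xS; pose y : 'cV[R]_n := \col_v (if v \in C then 0 else x v 0).
suff /matrixP y0 : y = 0 by move=> j; rewrite inE => /negbTE Cj; have := y0 j 0; rewrite !mxE Cj.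
apply: (pcharmx_kernel_eq0 phiO) => [j|v /setDP [Sv Cv]].
  rewrite in_setC in_setD negb_and negbK mxE => /orP [-> // | Sj].
  by case: ifP => // _; apply: xS; rewrite in_setC.
have xker : ((l%:M - A) *m x) v 0 = 0 by rewrite mulmxBl Ax mul_scalar_mx subrr mxE.
rewrite -xker !mxE; apply: eq_bigr => j _; rewrite !mxE.
case: ifP => // Cj; have vj : (v == j) = false by apply: contraNF Cv => /eqP ->.
by rewrite vj (symA_entry symA) (component_adj0 wS Cj) // subrr !mul0r.
Qed.

Lemma pathvec_eigenvector (x : 'cV[R]_n) :
  phi A (C :\ w) l != 0 -> A *m x = l *: x -> x != 0 -> {in ~: C, forall j, x j 0 = 0} ->
  pathvec A l S w w 0 != 0 /\ A *m pathvec A l S w = l *: pathvec A l S w.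
Proof.
move=> phiCw Ax x0 xC; set a := pathvec A l S w.
have Cw := mem_component A S w.
have xker v : ((l%:M - A) *m x) v 0 = 0 by rewrite mulmxBl Ax mul_scalar_mx subrr mxE.
have phiC : phi A C l = 0.
  apply/eqP; apply: contraNT x0 => phiC; apply/eqP.
  by apply: (pcharmx_kernel_eq0 phiC) => // v _; apply: xker.
have xw : x w 0 != 0.
  apply: contraNneq x0 => xw0; apply/eqP; apply: (pcharmx_kernel_eq0 phiCw) => [j|v _] //.
  rewrite in_setC in_setD1 negb_and negbK => /orP [/eqP -> // | Cj].
  by apply: xC; rewrite in_setC.
have aw : a w 0 = phi A (C :\ w) l by rewrite pathvec_root.
pose g := x w 0 *: a - a w 0 *: x.
have gC : {in ~: C, forall j, g j 0 = 0}.
  by move=> j Cj; rewrite !mxE (pathvec_out l Cj) (xC j Cj) !mulr0 subrr.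
have pCx : pcharmx A l C *m x = 0.
  apply/matrixP => j k; rewrite (ord1 k) [RHS]mxE.
  have [Cj|Cj] := boolP (j \in C); first by rewrite (pcharmx_mulmx_in A l xC Cj) xker.
  by rewrite pcharmx_mulmx_out // xC // in_setC.
have g0 : g = 0.
  apply: (pcharmx_kernel_eq0 phiCw) => [j|v /setD1P [_ Cv]].
    rewrite in_setC in_setD1 negb_and negbK => /orP [/eqP -> | Cj].
      by rewrite !mxE mulrC subrr.
    by apply: gC; rewrite in_setC.
  rewrite -(pcharmx_mulmx_in A l gC Cv) mulmxBr -!scalemxAr (pcharmx_pathvec l symA acA wS).
  by rewrite phiC pCx scaler0 !mxE !mulr0 subrr.
have ax : a = (a w 0 / x w 0) *: x.
  apply: (scalerI xw); rewrite scalerA mulrC -mulrA mulVf // mulr1.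
  by apply/eqP; rewrite -subr_eq0 -/g g0.
split; first by rewrite aw.
by rewrite ax -scalemxAr Ax !scalerA mulrC.
Qed.

End ComponentEigenvectors.

Lemma star_pathvec_eigenvector (R : realType) n (A : 'M[R]_n) l (U : {set 'I_n}) w :
  A^T = A -> acyclic A -> w \in U -> phi A (~: U) l != 0 ->
  (#|U :\ w| < \rank (eigenspace A l))%N ->
  let a := pathvec A l (~: (U :\ w)) w in a w 0 != 0 /\ A *m a = l *: a.
Proof.
move=> symA acA Uw phiU rankE a; set S := ~: (U :\ w).
have wS : w \in S by rewrite !inE eqxx.
have [y /eigenspaceP yA [y0 yU]] := exists_vanishing_row rankE.
have Ay : A *m y^T = l *: y^T by rewrite -{1}symA -trmx_mul yA linearZ.
have SwU : S :\ w = ~: U.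
  by apply/setP => z; rewrite !inE negb_and negbK; case: eqVneq => [->|] /=; rewrite ?Uw.
move: phiU; rewrite -SwU (phi_setD1_component l symA wS) mulf_eq0 negb_or => /andP [phiO phiCw].
apply: (pathvec_eigenvector symA acA wS phiCw Ay); first by rewrite trmx_eq0.
apply: (eigenvector_component_support symA wS phiO Ay) => j.
by rewrite /S !in_setC negbK mxE => /yU.
Qed.

Theorem theorem3p8 (R : realType) (n : nat) (A : 'M[R]_n) (l : R) (k : nat)
    (u : 'I_k -> 'I_n) :
  A^T = A ->
  acyclic A ->
  eigenvalue A l ->
  eig_mult A l = k ->
  injective u ->
  star_set A l [set u i | i : 'I_k] ->
  let Ui i := [set u j | j : 'I_k] :\ u i in
  let Ci i := component A (~: Ui i) (u i) in
  let alpha i : 'cV[R]_n :=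
    \col_v (if v \in Ci i
            then pathweight A (u i) v * phi A (Ci i :\: pathset A (u i) v) l
            else 0) in
  (forall i, alpha i != 0 /\ A *m alpha i = l *: alpha i) /\
  (forall c : 'I_k -> R, \sum_i c i *: alpha i = 0 -> forall i, c i = 0).
Proof.
move=> symA acA _ _ inj_u [cardU nev] Ui Ci alpha.
have phiU : phi A (~: [set u i | i : 'I_k]) l != 0 by move: nev; rewrite eigenvalue_root_char.
have Uu i : u i \in [set u j | j : 'I_k] by apply: imset_f.
have alphaE i : alpha i = pathvec A l (~: Ui i) (u i).
  by apply/matrixP => v j; rewrite (ord1 j) pathvecE mxE.
have eig i : alpha i (u i) 0 != 0 /\ A *m alpha i = l *: alpha i.
  rewrite alphaE; apply: (star_pathvec_eigenvector symA acA (Uu i) phiU).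
  rewrite -(mup_char_poly_sym l symA) -/(eig_mult A l) -cardU.
  by rewrite [X in (_ < X)%N](cardsD1 (u i)) Uu.
have alpha_off i j : j != i -> alpha j (u i) 0 = 0.
  move=> ji; have uiS : u i \notin ~: Ui j by rewrite !inE negbK (inj_eq inj_u) eq_sym ji Uu.
  have ujS : u j \in ~: Ui j by rewrite !inE eqxx.
  by rewrite alphaE pathvec_out // in_setC; apply: contraNN uiS; apply: component_sub.
split=> [i | c sum0 i].
  by have [ne0 Aa] := eig i; split=> //; apply: contraNneq ne0 => ->; rewrite mxE.
have := congr1 (fun M : 'cV_n => M (u i) 0) sum0; rewrite summxE (bigD1 i) //= big1 => [|j ji].
  by rewrite addr0 [LHS]mxE [RHS]mxE => /eqP; rewrite mulf_eq0 (negbTE (eig i).1) orbF => /eqP.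
by rewrite mxE alpha_off ?mulr0.
Qed.
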